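(* For $0<y<x\le1$ let $$f(x,y)=x^2y^2\,\frac{2(2-x-y)-\frac{(x-y)^2}{2-x-y}}{(x-y)^2},\qquad g(x,y)=x^2y^2\,\frac{2(2-x-y)-\frac{(x-y)^2}{2(2-x-y)}}{(x-y)^2},$$ $$B_2(x,y)=\frac{x+y+\frac14\,\frac{\left((x+y)\frac{f(x,y)}{xy}-xy\right)^2}{g(x,y)}}{\sqrt{x+\frac{g(x,y)}{xy}}}.$$ If $0<y<x\le1$, then $B_2(x,y)>0.9$. *)

From Stdlib Require Import Reals.
Open Scope R_scope.

Definition f (x y : R) : R :=
  x^2 * y^2 * ((2 * (2 - x - y) - (x - y)^2 / (2 - x - y)) / (x - y)^2).

Definition g (x y : R) : R :=
  x^2 * y^2 * ((2 * (2 - x - y) - (x - y)^2 / (2 * (2 - x - y))) / (x - y)^2).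

Definition B2 (x y : R) : R :=
  (x + y + / 4 * (((x + y) * (f x y / (x * y)) - x * y)^2 / g x y))
  / sqrt (x + g x y / (x * y)).

(** Clearing the nested fractions, B2 = N / sqrt M with N and M rational in
    x and y, so the claim is 81/100 * M < N^2.  In the coordinates
    a = 1 - x, d = x - y, e = y, which are nonnegative and sum to 1, the
    numerator of N^2 - 81/100 * M becomes a homogeneous polynomial of degree
    12 all of whose coefficients are positive. *)

From Pilot Require Import Defs.
From Stdlib Require Import Reals Lra Psatz.
Open Scope R_scope.

Lemma lt_div_sqrt (c N M : R) :
  0 <= c -> 0 < M -> 0 <= N -> c ^ 2 * M < N ^ 2 -> c < N / sqrt M.
Proof.
  intros hc hM hN hcNM.
  pose proof (sqrt_lt_R0 M hM) as hsqrt_pos.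
  pose proof (sqrt_sqrt M (Rlt_le _ _ hM)) as hsqrt_sq.
  assert (hlt : c * sqrt M < N) by nra.
  apply Rmult_lt_reg_r with (sqrt M); [exact hsqrt_pos |].
  unfold Rdiv; rewrite Rmult_assoc, Rinv_l, Rmult_1_r; lra.
Qed.

Definition B2_num (x y : R) : R :=
  x + y + 2 * ((x + y) * (2 - x - y) ^ 2 - (x - y) ^ 2) ^ 2
          / ((2 - x - y) * (x - y) ^ 2 * (4 * (2 - x - y) ^ 2 - (x - y) ^ 2)).

Definition B2_rad (x y : R) : R :=
  x + x * y * (4 * (2 - x - y) ^ 2 - (x - y) ^ 2) / (2 * (2 - x - y) * (x - y) ^ 2).

Lemma B2_closed_form (x y : R) :
  x <> 0 -> y <> 0 -> x - y <> 0 -> 2 - x - y <> 0 ->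
  4 * (2 - x - y) ^ 2 - (x - y) ^ 2 <> 0 ->
  B2 x y = B2_num x y / sqrt (B2_rad x y).
Proof.
  intros hx hy hd hs hQ.
  assert (hrad : x + g x y / (x * y) = B2_rad x y)
    by (unfold g, B2_rad; field; auto).
  assert (hnum : x + y + / 4 * (((x + y) * (Defs.f x y / (x * y)) - x * y) ^ 2 / g x y)
                 = B2_num x y)
    by (unfold Defs.f, g, B2_num; field; auto).
  unfold B2; rewrite hrad, hnum; reflexivity.
Qed.

Definition B2_cert (a d e : R) : R :=
    d ^ 8 * (800 * e ^ 4 + 2613 * d * e ^ 3 + 3768 * d ^ 2 * e ^ 2
             + 2097 * d ^ 3 * e + 342 * d ^ 4)
  + a * d ^ 7 * (25600 * e ^ 4 + 82234 * d * e ^ 3 + 88097 * d ^ 2 * e ^ 2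
             + 34221 * d ^ 3 * e + 3558 * d ^ 4)
  + a ^ 2 * d ^ 6 * (332800 * e ^ 4 + 975600 * d * e ^ 3 + 905170 * d ^ 2 * e ^ 2
             + 298322 * d ^ 3 * e + 29552 * d ^ 4)
  + a ^ 3 * d ^ 5 * (2252800 * e ^ 4 + 5942944 * d * e ^ 3 + 5013040 * d ^ 2 * e ^ 2
             + 1534984 * d ^ 3 * e + 178488 * d ^ 4)
  + a ^ 4 * d ^ 4 * (8499200 * e ^ 4 + 20550400 * d * e ^ 3 + 16157600 * d ^ 2 * e ^ 2
             + 4731808 * d ^ 3 * e + 639008 * d ^ 4)
  + a ^ 5 * d ^ 3 * (18022400 * e ^ 4 + 40877568 * d * e ^ 3 + 30435072 * d ^ 2 * e ^ 2
             + 8554496 * d ^ 3 * e + 1294592 * d ^ 4)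
  + a ^ 6 * d ^ 2 * (21299200 * e ^ 4 + 46010368 * d * e ^ 3 + 32687616 * d ^ 2 * e ^ 2
             + 8746496 * d ^ 3 * e + 1461248 * d ^ 4)
  + a ^ 7 * d * (13107200 * e ^ 4 + 27189248 * d * e ^ 3 + 18468864 * d ^ 2 * e ^ 2
             + 4630528 * d ^ 3 * e + 858112 * d ^ 4)
  + a ^ 8 * (3276800 * e ^ 4 + 6553600 * d * e ^ 3 + 4251648 * d ^ 2 * e ^ 2
             + 974848 * d ^ 3 * e + 204800 * d ^ 4).

Lemma B2_cert_pos (a d e : R) : 0 <= a -> 0 < d -> 0 < e -> 0 < B2_cert a d e.
Proof.
  intros ha hd he; unfold B2_cert.
  repeat first [ apply Rplus_lt_le_0_compat | apply Rplus_le_le_0_compat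
               | apply Rmult_lt_0_compat | apply Rmult_le_pos
               | apply pow_lt | apply pow_le ]; lra.
Qed.

Lemma B2_num_sq_sub_rad (x y : R) :
  x - y <> 0 -> 2 - x - y <> 0 -> 4 * (2 - x - y) ^ 2 - (x - y) ^ 2 <> 0 ->
  B2_num x y ^ 2 - 81 / 100 * B2_rad x y
  = B2_cert (1 - x) (x - y) y
    / (200 * ((2 - x - y) * (x - y) ^ 2 * (4 * (2 - x - y) ^ 2 - (x - y) ^ 2)) ^ 2).
Proof. intros hd hs hQ; unfold B2_num, B2_rad, B2_cert; field; auto. Qed.

Section Triangle.

Variables x y : R.
Hypotheses (hy : 0 < y) (hyx : y < x) (hx : x <= 1).

Lemma B2_denominators_pos :
  0 < 2 - x - y /\ 0 < x - y /\ 0 < 4 * (2 - x - y) ^ 2 - (x - y) ^ 2.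
Proof. repeat split; nra. Qed.

Lemma B2_rad_pos : 0 < B2_rad x y.
Proof.
  destruct B2_denominators_pos as (hs & hd & hQ); unfold B2_rad.
  assert (0 < x * y * (4 * (2 - x - y) ^ 2 - (x - y) ^ 2) / (2 * (2 - x - y) * (x - y) ^ 2));
    [apply Rdiv_lt_0_compat; repeat apply Rmult_lt_0_compat; try apply pow_lt; lra | lra].
Qed.

Lemma B2_num_nonneg : 0 <= B2_num x y.
Proof.
  destruct B2_denominators_pos as (hs & hd & hQ); unfold B2_num.
  assert (0 <= 2 * ((x + y) * (2 - x - y) ^ 2 - (x - y) ^ 2) ^ 2
               / ((2 - x - y) * (x - y) ^ 2 * (4 * (2 - x - y) ^ 2 - (x - y) ^ 2)));
    [| lra].
  apply Rle_mult_inv_pos; [apply Rmult_le_pos; [lra | apply pow2_ge_0] |].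
  repeat apply Rmult_lt_0_compat; try apply pow_lt; lra.
Qed.

Lemma B2_rad_lt_num_sq : (9 / 10) ^ 2 * B2_rad x y < B2_num x y ^ 2.
Proof.
  destruct B2_denominators_pos as (hs & hd & hQ).
  apply Rminus_gt_0_lt.
  replace ((9 / 10) ^ 2) with (81 / 100) by field.
  rewrite B2_num_sq_sub_rad by lra.
  apply Rdiv_lt_0_compat; [apply B2_cert_pos; lra |].
  apply Rmult_lt_0_compat; [lra |].
  apply pow_lt; repeat apply Rmult_lt_0_compat; try apply pow_lt; lra.
Qed.

End Triangle.

Theorem lemma4 (x y : R) (hy : 0 < y) (hyx : y < x) (hx : x <= 1) :
  B2 x y > 9 / 10.
Proof.
  destruct (B2_denominators_pos x y hyx hx) as (hs & hd & hQ).
  rewrite B2_closed_form by lra.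
  apply lt_div_sqrt.
  - lra.
  - exact (B2_rad_pos x y hy hyx hx).
  - exact (B2_num_nonneg x y hy hyx hx).
  - exact (B2_rad_lt_num_sq x y hy hyx hx).
Qed.
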